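(* $\oplus_{tot}\mathsf{P}=\oplus\mathsf{P}$.
   Context: An NPTM is a non-deterministic polynomial-time Turing machine. For an NPTM $M$ and input $x$, $acc_M(x)$ is the number of accepting paths of $M$ on $x$ and $tot_M(x)$ is the number of all computation paths of $M$ on $x$ minus $1$. $\#\mathsf{P}=\{acc_M\}$, $\mathsf{TotP}=\{tot_M\}$ over all NPTMs $M$. $\oplus\mathsf{P}$ is the class of languages $L$ for which there is $f\in\#\mathsf{P}$ with $x\in L\iff f(x)$ is odd. $\oplus_{tot}\mathsf{P}$ is defined identically with $f\in\mathsf{TotP}$. *)

From mathcomp Require Import all_boot.
Set Implicit Arguments. Unset Strict Implicit. Unset Printing Implicit Defensive.

(* Single-tape nondeterministic Turing machines over the input alphabet {0,1}.
   Tape symbols: [None] = blank, [Some (inl b)] = input bit b,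
   [Some (inr w)] = extra work symbol w : Wk.
   The tape is one-way infinite; a configuration is (state, cells strictly left
   of the head in reverse order, cells from the head rightwards).  Moves:
   [true] = right, [false] = left (a left move at the left end stays). *)
Record NTM := {
  St : finType;
  Wk : finType;
  start : St;
  accepting : {set St};
  delta : St -> option (bool + Wk) -> {set St * option (bool + Wk) * bool}
}.

Definition sym (M : NTM) := option (bool + Wk M).
Definition config (M : NTM) := (St M * seq (sym M) * seq (sym M))%type.

Definition init (M : NTM) (x : seq bool) : config M :=
  (start M, [::], [seq Some (inl b) | b <- x]).

Definition head_sym (M : NTM) (c : config M) : sym M :=
  if c.2 is a :: _ then a else None.

Definition trans (M : NTM) (c : config M) :=
  delta c.1.1 (head_sym c).

Definition halted (M : NTM) (c : config M) : bool := trans c == set0.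

Definition step (M : NTM) (c : config M) (t : St M * sym M * bool) : config M :=
  let: (q', a, mv) := t in
  let: (_, l, r) := c in
  let r' := a :: behead r in
  if mv then (q', a :: l, behead r')
  else match l with
       | [::] => (q', [::], r')
       | b :: l' => (q', l', b :: r')
       end.

Fixpoint halts_within (M : NTM) (n : nat) (c : config M) : bool :=
  if halted c then true else
  match n with
  | 0 => false
  | n'.+1 => [forall t in trans c, halts_within n' (step c t)]
  end.

Fixpoint npaths (M : NTM) (n : nat) (c : config M) : nat :=
  if halted c then 1 else
  match n with
  | 0 => 0
  | n'.+1 => \sum_(t in trans c) npaths n' (step c t)
  end.

Fixpoint naccpaths (M : NTM) (n : nat) (c : config M) : nat :=
  if halted c then (c.1.1 \in accepting M) : nat else
  match n with
  | 0 => 0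
  | n'.+1 => \sum_(t in trans c) naccpaths n' (step c t)
  end.

Definition time_bound (k n : nat) := n ^ k + k.

Definition NPTM_with (M : NTM) (k : nat) :=
  forall x : seq bool, halts_within (time_bound k (size x)) (init M x).

Definition acc_M (M : NTM) (k : nat) (x : seq bool) :=
  naccpaths (time_bound k (size x)) (init M x).
Definition tot_M (M : NTM) (k : nat) (x : seq bool) :=
  npaths (time_bound k (size x)) (init M x) - 1.

Definition SharpP (f : seq bool -> nat) : Prop :=
  exists (M : NTM) (k : nat), NPTM_with M k /\ forall x, f x = acc_M M k x.

Definition TotP (f : seq bool -> nat) : Prop :=
  exists (M : NTM) (k : nat), NPTM_with M k /\ forall x, f x = tot_M M k x.

Definition ParityP (L : seq bool -> Prop) : Prop :=
  exists f, SharpP f /\ forall x, L x <-> odd (f x).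

Definition ParityTotP (L : seq bool -> Prop) : Prop :=
  exists f, TotP f /\ forall x, L x <-> odd (f x).

From mathcomp Require Import all_boot.
Set Implicit Arguments. Unset Strict Implicit. Unset Printing Implicit Defensive.

(* Both inclusions use one simulation E of a machine M.  E first branches into
   an accepting leaf and a copy of M; in the copy every state is accepting and,
   optionally, each rejecting leaf of M is split into two leaves.  Without
   splitting, acc_E = #paths(E) = #paths(M) + 1, which has the parity of
   tot_M = #paths(M) - 1.  With splitting, tot_E = 2 #paths(M) - acc_M, which
   has the parity of acc_M. *)

Section Computations.
Variable M : NTM.
Implicit Types (c : config M) (n m : nat).

Lemma halts_within_halted n c : halted c -> halts_within n c.
Proof. by case: n => [|n] /= ->. Qed.

Lemma npaths_halted n c : halted c -> npaths n c = 1.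
Proof. by case: n => [|n] /= ->. Qed.

Lemma naccpaths_halted n c : halted c -> naccpaths n c = (c.1.1 \in accepting M).
Proof. by case: n => [|n] /= ->. Qed.

Lemma halts_within_running n c : ~~ halted c ->
  halts_within n.+1 c = [forall t in trans c, halts_within n (step c t)].
Proof. by move=> /negbTE /= ->. Qed.

Lemma npaths_running n c : ~~ halted c ->
  npaths n.+1 c = \sum_(t in trans c) npaths n (step c t).
Proof. by move=> /negbTE /= ->. Qed.

Lemma naccpaths_running n c : ~~ halted c ->
  naccpaths n.+1 c = \sum_(t in trans c) naccpaths n (step c t).
Proof. by move=> /negbTE /= ->. Qed.

Lemma halts_within_le n m c : n <= m -> halts_within n c -> halts_within m c.
Proof.
elim: n m c => [|n IHn] [|m] c //=; case: (halted c) => //= le_nm.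
by move/forall_inP=> hw; apply/forall_inP=> t /hw; apply: IHn.
Qed.

Lemma npaths_stable n m c : n <= m -> halts_within n c -> npaths m c = npaths n c.
Proof.
elim: n m c => [|n IHn] [|m] c //=; case: (halted c) => //= le_nm.
by move/forall_inP=> hw; apply: eq_bigr => t /hw; apply: IHn.
Qed.

Lemma npaths_gt0 n c : halts_within n c -> 0 < npaths n c.
Proof.
elim: n c => [|n IHn] c /=; case: ifPn => // /set0Pn[t tc] /forall_inP hw.
by rewrite (bigD1 t) //= ltn_addr // IHn // hw.
Qed.

Lemma naccpaths_all_accepting n c : accepting M = setT -> naccpaths n c = npaths n c.
Proof.
move=> accT; elim: n c => [|n IHn] c /=; rewrite accT inE //.
by case: (halted c) => //; apply: eq_bigr.
Qed.

Lemma step_state c t : (step c t).1.1 = t.1.1.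
Proof. by case: c => [[q l] r]; case: t => [[q' a] []]; case: l. Qed.

(* [c] with an empty right tape [[::]] replaced by [[:: None]], i.e. with the
   blank under the head written explicitly; such a configuration is
   indistinguishable from [c]. *)
Definition expose_head c : config M := (c.1, head_sym c :: behead c.2).

Lemma trans_expose_head c : trans (expose_head c) = trans c.
Proof. by case: c => [[q l] []]. Qed.

Lemma step_expose_head c t : step (expose_head c) t = step c t.
Proof. by case: c => [[q l] r]; case: t => [[q' a] []]. Qed.

Lemma npaths_expose_head n c : npaths n (expose_head c) = npaths n c.
Proof.
case: n => [|n] /=; rewrite /halted trans_expose_head //.
by case: ifP => //; under eq_bigr do rewrite step_expose_head.
Qed.

Lemma halts_within_expose_head n c :
  halts_within n (expose_head c) = halts_within n c.
Proof.
case: n => [|n] /=; rewrite /halted trans_expose_head //.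
by case: ifP => //; under eq_forallb do rewrite step_expose_head.
Qed.

End Computations.

Lemma acc_all_accepting (M : NTM) k x : accepting M = setT -> NPTM_with M k ->
  acc_M M k x = (tot_M M k x).+1.
Proof.
move=> accT HM; rewrite /acc_M /tot_M naccpaths_all_accepting // subn1.
by rewrite prednK // npaths_gt0.
Qed.

Lemma time_bound_add2 k n : (time_bound k n).+2 <= time_bound k.+3 n.
Proof.
rewrite /time_bound !addnS !ltnS -addSn leq_add2r.
case: n => [|n]; first by case: k => // k; rewrite !exp0n.
by apply/leqW/leq_pexp2l; rewrite // -addn3 leq_addr.
Qed.

Section Extension.
Variables (M : NTM) (split_rejecting : bool).

(* [inr None] is the new start state, [inr (Some b)] are halting states used
   for the extra leaves. *)
Definition ext_state := (St M + option bool)%type.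

Definition lift_trans (t : St M * sym M * bool) : ext_state * sym M * bool :=
  (inl t.1.1, t.1.2, t.2).

Definition leaf_trans (b : bool) (a : sym M) : ext_state * sym M * bool :=
  (inr (Some b), a, false).

Definition ext_delta (s : ext_state) (a : sym M) :=
  match s with
  | inl q =>
      if delta q a == set0 then
        if split_rejecting && (q \notin accepting M)
        then [set leaf_trans true a; leaf_trans false a] else set0
      else lift_trans @: delta q a
  | inr None => [set leaf_trans true a; (inl (start M), a, false)]
  | inr (Some _) => set0
  end.

Definition ext : NTM :=
  {| St := ext_state; Wk := Wk M; start := inr None; accepting := setT;
     delta := ext_delta |}.

Definition lift (c : config M) : config ext := (inl c.1.1, c.1.2, c.2).

Lemma lift_trans_inj : injective lift_trans.
Proof. by case=> [[q a] m] [[q' a'] m'] [-> -> ->]. Qed.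

Lemma trans_lift c : trans (lift c) =
  if halted c then
    if split_rejecting && (c.1.1 \notin accepting M)
    then [set leaf_trans true (head_sym c); leaf_trans false (head_sym c)]
    else set0
  else lift_trans @: trans c :> {set St ext * sym ext * bool}.
Proof. by case: c => [[q l] r]. Qed.

Lemma step_lift c t : step (lift c) (lift_trans t) = lift (step c t).
Proof. by case: c => [[q l] r]; case: t => [[q' a] []]; case: l. Qed.

Lemma halted_step_leaf (c : config ext) b a : halted (step c (leaf_trans b a)).
Proof.
have := step_state c (leaf_trans b a).
by case: (step c _) => [[q l] r] /= ->; rewrite /halted /trans /= eqxx.
Qed.

Lemma lift_halted n c : halted c ->
  halts_within n.+1 (lift c) /\
  npaths n.+1 (lift c) = (split_rejecting && (c.1.1 \notin accepting M)).+1.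
Proof.
move=> hc; have := trans_lift c; rewrite hc; case: ifP => _ tr; last first.
  have hl : halted (lift c) by rewrite /halted tr.
  by rewrite halts_within_halted ?npaths_halted.
have hl : ~~ halted (lift c).
  rewrite /halted tr; apply/set0Pn.
  by exists (leaf_trans true (head_sym c)); rewrite set21.
have leaf_halts t : t \in trans (lift c) -> halted (step (lift c) t).
  by rewrite tr => /set2P[] ->; apply: halted_step_leaf.
rewrite halts_within_running // npaths_running //; split.
  by apply/forall_inP => t /leaf_halts/halts_within_halted.
rewrite (eq_bigr (fun=> 1)) => [|t /leaf_halts/npaths_halted //].
by rewrite sum1_card tr cards2.
Qed.

Lemma lift_running n c : ~~ halted c ->
  halts_within n.+1 (lift c) = [forall t in trans c, halts_within n (lift (step c t))] /\
  npaths n.+1 (lift c) = \sum_(t in trans c) npaths n (lift (step c t)).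
Proof.
move=> hc; have tr : trans (lift c) = lift_trans @: trans c.
  by rewrite trans_lift (negbTE hc).
have hl : ~~ halted (lift c) by rewrite /halted tr imset_eq0.
rewrite halts_within_running // npaths_running // tr big_imset; last first.
  by move=> ? ? _ _; apply: lift_trans_inj.
split; last by apply: eq_bigr => t _; rewrite step_lift.
apply/forall_inP/forall_inP => hw t tc; first by rewrite -step_lift hw ?imset_f.
by case/imsetP: tc => t' t'c ->; rewrite step_lift hw.
Qed.

Lemma halts_within_lift n c : halts_within n c -> halts_within n.+1 (lift c).
Proof.
elim: n c => [|n IHn] c; have [hc _|hc] := boolP (halted c);
  try exact: proj1 (lift_halted _ hc).
  by rewrite /= (negbTE hc).
rewrite halts_within_running // (proj1 (lift_running n.+1 hc)) => /forall_inP hw.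
by apply/forall_inP => t /hw /IHn.
Qed.

Lemma npaths_lift n c : halts_within n c ->
  npaths n.+1 (lift c) + split_rejecting * naccpaths n c =
  split_rejecting.+1 * npaths n c.
Proof.
have leaf m c' : halted c' ->
  npaths m.+1 (lift c') + split_rejecting * naccpaths m c' =
  split_rejecting.+1 * npaths m c'.
  move=> hc'; have [_ ->] := lift_halted m hc'.
  rewrite naccpaths_halted // npaths_halted //.
  by case: split_rejecting (c'.1.1 \in accepting M) => -[].
elim: n c => [|n IHn] c; have [hc _|hc] := boolP (halted c); try exact: leaf.
  by rewrite /= (negbTE hc).
rewrite (proj2 (lift_running n.+1 hc)) naccpaths_running // npaths_running //.
rewrite halts_within_running // => /forall_inP hw; rewrite !big_distrr -big_split.
by apply: eq_bigr => t /hw /IHn.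
Qed.

Section Start.
Variable x : seq bool.
Let a := head_sym (init M x).
Let sim_trans : ext_state * sym M * bool := (inl (start M), a, false).

Lemma trans_ext_init :
  trans (init ext x) =
  [set leaf_trans true a; sim_trans] :> {set St ext * sym ext * bool}.
Proof. by []. Qed.

Lemma ext_init_running : ~~ halted (init ext x).
Proof.
rewrite /halted trans_ext_init; apply/set0Pn.
by exists (leaf_trans true a); rewrite set21.
Qed.

(* Moving left at the left end of the tape leaves the head in place. *)
Lemma step_ext_init_sim : step (init ext x) sim_trans = expose_head (lift (init M x)).
Proof. by []. Qed.

Lemma halts_within_ext_init n :
  halts_within n (init M x) -> halts_within n.+2 (init ext x).
Proof.
move/halts_within_lift=> hw; rewrite halts_within_running ?ext_init_running //.
apply/forall_inP => t; rewrite trans_ext_init => /set2P[] ->.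
  exact/halts_within_halted/halted_step_leaf.
by rewrite step_ext_init_sim halts_within_expose_head.
Qed.

Lemma npaths_ext_init n :
  npaths n.+1 (init ext x) = (npaths n (lift (init M x))).+1.
Proof.
rewrite npaths_running ?ext_init_running // trans_ext_init big_setU1 ?inE //.
by rewrite big_set1 step_ext_init_sim npaths_expose_head npaths_halted ?halted_step_leaf.
Qed.

End Start.

Lemma NPTM_with_ext k : NPTM_with M k -> NPTM_with ext k.+3.
Proof.
move=> HM x; apply: halts_within_le (time_bound_add2 k _) _.
exact: halts_within_ext_init.
Qed.

Lemma tot_M_ext k x : NPTM_with M k ->
  tot_M ext k.+3 x + split_rejecting * acc_M M k x =
  split_rejecting.+1 * npaths (time_bound k (size x)) (init M x).
Proof.
move=> HM; have hw := halts_within_ext_init (HM x).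
rewrite /tot_M (npaths_stable (time_bound_add2 k _) hw) npaths_ext_init subn1.
exact: npaths_lift.
Qed.

Lemma acc_M_ext k x : NPTM_with M k -> acc_M ext k.+3 x = (tot_M ext k.+3 x).+1.
Proof. by move=> HM; apply/acc_all_accepting/NPTM_with_ext. Qed.

End Extension.

Lemma odd_predn_succ n : 0 < n -> odd n.-1 = odd n.+1.
Proof. by case: n => //= n; rewrite negbK. Qed.

Lemma odd_eq_add_double a b n : a + b = n.*2 -> odd a = odd b.
Proof. by move/(congr1 odd); rewrite oddD odd_double; case: (odd a); case: (odd b). Qed.

Theorem proposition8 : forall L : seq bool -> Prop, ParityTotP L <-> ParityP L.
Proof.
move=> L; split; case=> f [[M [k [HM Hf]]] HL].
  exists (acc_M (ext M false) k.+3); split.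
    by exists (ext M false), k.+3; split; first exact: NPTM_with_ext.
  move=> x; apply: iff_trans (HL x) _; rewrite Hf acc_M_ext //.
  have := tot_M_ext false x HM; rewrite mul1n addn0 => ->.
  by rewrite /tot_M subn1 odd_predn_succ ?npaths_gt0.
exists (tot_M (ext M true) k.+3); split.
  by exists (ext M true), k.+3; split; first exact: NPTM_with_ext.
move=> x; apply: iff_trans (HL x) _; rewrite Hf.
have := tot_M_ext true x HM; rewrite mul1n mul2n => /odd_eq_add_double ->.
exact: iff_refl.
Qed.
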